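(* Let $G=(V,E)$ be an undirected simple graph, let $k\ge 2$ be an integer and $v\in V$. Let $m_v$ be the number of edges of the ego-network $G_{N(v)}$. Then $$score(v)\le \min\Big\{\Big\lfloor \frac{d(v)}{k}\Big\rfloor,\ \Big\lfloor\frac{2m_v}{k(k-1)}\Big\rfloor\Big\}.$$
   Context: $N(v)$ is the neighbor set of $v$, $d(v)=|N(v)|$, and $G_{N(v)}$ is the subgraph of $G$ induced by $N(v)$. For an integer $k\ge 2$, the $k$-truss of a graph $H$ is the subgraph formed by the largest edge set $F\subseteq E(H)$ such that every edge of $F$ lies in at least $k-2$ triangles all of whose edges are in $F$ (its vertices are those incident to edges of $F$). $score(v)$ is the number of connected components of the $k$-truss of $G_{N(v)}$. *)

From mathcomp Require Import all_boot.
Set Implicit Arguments. Unset Strict Implicit. Unset Printing Implicit Defensive.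

(* A finite undirected simple graph is a symmetric irreflexive relation
   [e : rel T] on a finite vertex type [T]. An edge is represented as the
   2-element vertex set [set a; b]. *)

Section Truss.
Variables (T : finType) (e : rel T).

Definition nbhd (v : T) : {set T} := [set u | e v u].

Definition deg (v : T) : nat := #|nbhd v|.

Definition induced_edges (S : {set T}) : {set {set T}} :=
  [set [set a; b] | a in S, b in S & e a b].

Definition ego_edges (v : T) : {set {set T}} := induced_edges (nbhd v).

Definition ego_size (v : T) : nat := #|ego_edges v|.

Definition tri_count (F : {set {set T}}) (a b : T) : nat :=
  #|[set x : T | ([set a; x] \in F) && ([set b; x] \in F)]|.

Definition truss_valid (k : nat) (EH F : {set {set T}}) : bool :=
  (F \subset EH) &&
  [forall a : T, forall b : T, ([set a; b] \in F) && (a != b) ==> (k - 2 <= tri_count F a b)].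

(* the edge set of the k-truss: the largest valid edge set
   (the union of all valid sets; valid sets are closed under union) *)
Definition ktruss_edges (k : nat) (EH : {set {set T}}) : {set {set T}} :=
  \bigcup_(F in [set F : {set {set T}} | truss_valid k EH F]) F.

Definition eadj (F : {set {set T}}) : rel T := fun a b => (a != b) && ([set a; b] \in F).
Definition evertices (F : {set {set T}}) : {set T} :=
  [set a | [exists b, eadj F a b]].

Definition n_components (F : {set {set T}}) : nat :=
  #|[set [set y in evertices F | connect (eadj F) x y] | x in evertices F]|.

Definition score (k : nat) (v : T) : nat :=
  n_components (ktruss_edges k (ego_edges v)).

End Truss.

From mathcomp Require Import all_boot.
From mathcomp Require Import zify.

(* In the k-truss every edge ab lies in at least k - 2 triangles, whose apexes
   together with b are k - 1 distinct neighbours of a. So every vertex of the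
   truss has degree at least k - 1 and every connected component has at least
   k vertices. Counting vertices gives score * k <= |N(v)|; counting edges by
   the handshake lemma gives score * k * (k - 1) <= 2 |E(truss)| <= 2 m_v. *)

Set Implicit Arguments.
Unset Strict Implicit.

Section EdgeSets.
Variables (T : finType) (F : {set {set T}}).

Definition enbhd (a : T) : {set T} := [set b | eadj F a b].

Lemma eadj_sym : symmetric (eadj F).
Proof. by move=> a b; rewrite /eadj setUC eq_sym. Qed.

Lemma card_enbhd_incident a : #|enbhd a| <= #|[set E in F | a \in E]|.
Proof.
rewrite -(@card_in_imset _ _ (fun b => [set a; b])); last first.
  move=> b c; rewrite !inE /eadj => /andP[ab _] _ abc.
  have : b \in [set a; c] by rewrite -abc set22.
  by rewrite !inE eq_sym (negbTE ab) => /eqP.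
apply/subset_leq_card/subsetP => _ /imsetP[b + ->]; rewrite !inE /eadj.
by case/andP=> _ ->; rewrite eqxx.
Qed.

Hypothesis F_pairs : {in F, forall E : {set T}, #|E| = 2}.

Lemma sum_card_enbhd : \sum_a #|enbhd a| <= 2 * #|F|.
Proof.
apply: (@leq_trans (\sum_a #|[set E in F | a \in E]|)).
  by apply: leq_sum => a _; apply: card_enbhd_incident.
rewrite (eq_bigr (fun a => \sum_(E in F | a \in E) 1)); last first.
  by move=> a _; rewrite sum1dep_card.
rewrite (exchange_big_dep (mem F)) /=; last by move=> a E _ /andP[].
rewrite mulnC -sum_nat_const; apply: leq_sum => E EF.
by rewrite -(F_pairs EF) -sum1_card EF.
Qed.

Variable k : nat.
Hypothesis F_tri :
  forall a b, a != b -> [set a; b] \in F -> k - 2 <= tri_count F a b.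

Lemma edge_neq a b : [set a; b] \in F -> a != b.
Proof. by move/F_pairs; rewrite cards2; case: (a != b). Qed.

Lemma card_enbhd_evertices a : a \in evertices F -> k - 1 <= #|enbhd a|.
Proof.
rewrite inE => /existsP[b /andP[ab abF]].
have := F_tri ab abF; rewrite /tri_count; set X := [set x | _] => le_X.
have bX : b \notin X by rewrite inE; apply/andP => -[_ /edge_neq]; rewrite eqxx.
have sub_X : b |: X \subset enbhd a.
  apply/subsetP => x; rewrite !inE /eadj => /predU1P[-> | /andP[axF _]].
    by rewrite ab abF.
  by rewrite edge_neq.
by have := subset_leq_card sub_X; rewrite cardsU1 bX; lia.
Qed.

Lemma card_component a : a \in evertices F ->
  k <= #|[set y in evertices F | connect (eadj F) a y]|.
Proof.
move=> aW; have := card_enbhd_evertices aW.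
have sub_comp : a |: enbhd a \subset [set y in evertices F | connect (eadj F) a y].
  apply/subsetP => y; rewrite !inE => /predU1P[-> | ay].
    by move: aW; rewrite inE => ->; rewrite connect0.
  by rewrite connect1 // andbT; apply/existsP; exists a; rewrite eadj_sym.
have aN : a \notin enbhd a by rewrite inE /eadj eqxx.
by have := subset_leq_card sub_comp; rewrite cardsU1 aN; lia.
Qed.

Lemma n_components_mul_le : n_components F * k <= #|evertices F|.
Proof.
have conn_equiv : {in evertices F & &, equivalence_rel (connect (eadj F))}.
  move=> x y z _ _ _; split=> [|xy]; first exact: connect0.
  by apply/idP/idP; apply: connect_trans; rewrite // (sym_connect_sym eadj_sym).
rewrite /n_components (card_partition (equivalence_partitionP conn_equiv)).
rewrite -sum_nat_const; apply: leq_sum => _ /imsetP[x xW ->].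
exact: card_component.
Qed.

Lemma evertices_mul_le : #|evertices F| * (k - 1) <= 2 * #|F|.
Proof.
apply: leq_trans sum_card_enbhd; rewrite -sum_nat_const.
rewrite [leqRHS](bigID (mem (evertices F))) /=.
by apply: leq_trans (leq_addr _ _); apply: leq_sum => a; apply: card_enbhd_evertices.
Qed.

End EdgeSets.

Section KTruss.
Variable T : finType.

Lemma tri_count_subset (F G : {set {set T}}) a b :
  F \subset G -> tri_count F a b <= tri_count G a b.
Proof.
move=> /subsetP FG; apply/subset_leq_card/subsetP => x.
by rewrite !inE => /andP[/FG -> /FG ->].
Qed.

Variables (k : nat) (EH : {set {set T}}).

Lemma ktruss_edges_sub : ktruss_edges k EH \subset EH.
Proof. by apply/bigcupsP => F; rewrite inE => /andP[]. Qed.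

Lemma ktruss_edges_tri a b : a != b -> [set a; b] \in ktruss_edges k EH ->
  k - 2 <= tri_count (ktruss_edges k EH) a b.
Proof.
move=> ab /bigcupP[F F_valid abF]; move: (F_valid); rewrite inE => /andP[_].
move=> /forallP/(_ a)/forallP/(_ b); rewrite abF ab => /leq_trans; apply.
exact/tri_count_subset/bigcup_sup.
Qed.

End KTruss.

Section InducedEdges.
Variables (T : finType) (e : rel T) (S : {set T}).

Lemma card_induced_edge : irreflexive e ->
  {in induced_edges e S, forall E : {set T}, #|E| = 2}.
Proof.
move=> e_irr E /imset2P[a b _]; rewrite inE => /andP[_ eab] ->.
by rewrite cards2; case: eqP eab => // ->; rewrite e_irr.
Qed.

Lemma evertices_induced (F : {set {set T}}) :
  F \subset induced_edges e S -> evertices F \subset S.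
Proof.
move=> /subsetP FS; apply/subsetP => a; rewrite inE => /existsP[b /andP[_]].
move=> /FS/imset2P[c d cS]; rewrite inE => /andP[dS _] abcd.
have : a \in [set c; d] by rewrite -abcd set21.
by rewrite !inE => /orP[] /eqP ->.
Qed.

End InducedEdges.

Theorem lemma2 (T : finType) (e : rel T) (e_sym : symmetric e) (e_irr : irreflexive e)
  (k : nat) (hk : 2 <= k) (v : T) :
  score e k v <= minn (deg e v %/ k) ((2 * ego_size e v) %/ (k * (k - 1))).
Proof.
set F := ktruss_edges k (ego_edges e v).
have F_ego : F \subset ego_edges e v := ktruss_edges_sub k _.
have F_pairs : {in F, forall E : {set T}, #|E| = 2}.
  by move=> E /(subsetP F_ego); apply: card_induced_edge.
have F_tri := @ktruss_edges_tri _ k (ego_edges e v).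
have score_W : score e k v * k <= #|evertices F|.
  exact: (n_components_mul_le F_pairs F_tri).
have W_deg : #|evertices F| <= deg e v.
  exact/subset_leq_card/evertices_induced/F_ego.
have W_edges : #|evertices F| * (k - 1) <= 2 * ego_size e v.
  apply: leq_trans (evertices_mul_le F_pairs F_tri) _.
  by rewrite leq_mul2l subset_leq_card.
rewrite leq_min !leq_divRL ?muln_gt0 ?subn_gt0 ?(leq_trans _ hk) //.
rewrite (leq_trans score_W W_deg) mulnA.
exact: leq_trans (leq_mul score_W (leqnn _)) W_edges.
Qed.
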